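(* Let $(X,\mathbf R)$ be a symmetric association scheme with $D$ classes, metric with respect to $A_0,\dots,A_D$. Fix $x\in X$, let $T=T(x)$, and let $t\in\{1,\dots,D\}$. For $\chi\in V$ the following are equivalent: (i) $\chi$ is orthogonal to every irreducible $T$-module $W\subseteq V$ with $1\le r(W)\le t$; (ii) $F\chi$ is a relative $t$-codesign with respect to $x$ for every $F\in T$. Moreover, if every irreducible $T$-module in $V$ with endpoint at most $t$ is thin, then the weaker condition ''$A_\ell\chi$ is a relative $t$-codesign with respect to $x$ for every $0\le\ell\le D$'' already implies (i) (and hence (ii)).
   Context: $(X,\mathbf R)$ is a symmetric association scheme with associate matrices $A_0=I,\dots,A_D$, Bose–Mesner algebra $M$, primitive idempotents $E_0=|X|^{-1}J,\dots,E_D$. Metric with respect to $A_0,\dots,A_D$ means $(X,R_1)$ is a distance-regular graph with $R_i$ its distance-$i$ relation. $V=\mathbb C^X$ with standard basis $\{\hat y\}$ and standard Hermitian inner product. For $x\in X$: $E_i^*(x)$ is diagonal with $(E_i^*(x))_{yy}=(A_i)_{xy}$; $A_i^*(x)$ is diagonal with $(A_i^*(x))_{yy}=|X|(E_i)_{xy}$; the Terwilliger algebra $T(x)$ is the subalgebra of $\mathrm{Mat}_X(\mathbb C)$ generated by $M$ and the $A_i^*(x)$ (equivalently the $E_i^*(x)$). For an irreducible $T(x)$-module $W\subseteq V$, its endpoint is $r(W)=\min\{i:E_i^*(x)W\ne0\}$, and $W$ is thin if $\dim E_i^*(x)W\le 1$ for all $i$. A vector $\psi$ is a relative $t$-codesign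 with respect to $x$ if $E_i^*(x)\psi$ and $A_i\hat x$ are linearly dependent for all $1\le i\le t$. *)

From HB Require Import structures.
From mathcomp Require Import all_boot all_order all_algebra.
Set Implicit Arguments. Unset Strict Implicit. Unset Printing Implicit Defensive.
Import Order.TTheory GRing.Theory Num.Theory.
Local Open Scope ring_scope.

(* Points of X are 'I_n; V = C^X is 'cV[C]_n; matrices in Mat_X(C) are 'M[C]_n.
   C is any numeric algebraically closed field (e.g. the complex numbers). *)

Section Scheme.
Variables (C : numClosedFieldType) (n D : nat).

Definition is_symmetric_scheme (A : 'I_D.+1 -> 'M[C]_n) : Prop :=
  [/\ (forall i y z, A i y z = 0 \/ A i y z = 1),
      A ord0 = 1%:M /\ \sum_i A i = const_mx 1,
      (forall i, (A i)^T = A i),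
      (forall i, A i != 0) &
      (forall i j, exists c : 'I_D.+1 -> C, A i *m A j = \sum_k c k *: A k)].

Definition mxpow (M : 'M[C]_n) (k : nat) : 'M[C]_n := iter k (mulmx M) 1%:M.

(* Metric: R_i is the distance-i relation of the graph (X, R_1):
   y ~_i z iff there is a walk of length i in R_1 from y to z but none shorter. *)
Definition is_metric (A : 'I_D.+1 -> 'M[C]_n) : Prop :=
  forall (i : 'I_D.+1) y z,
    A i y z = 1 <->
    (mxpow (A (inord 1)) i y z != 0 /\
     forall k, (k < i)%N -> mxpow (A (inord 1)) k y z = 0).

Definition dualE (A : 'I_D.+1 -> 'M[C]_n) (x : 'I_n) (i : 'I_D.+1) : 'M[C]_n :=
  diag_mx (row x (A i)).

Inductive inT (A : 'I_D.+1 -> 'M[C]_n) (x : 'I_n) : 'M[C]_n -> Prop :=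
  | inT_A i : inT A x (A i)
  | inT_dualE i : inT A x (dualE A x i)
  | inT_1 : inT A x 1%:M
  | inT_add F G : inT A x F -> inT A x G -> inT A x (F + G)
  | inT_scale (c : C) F : inT A x F -> inT A x (c *: F)
  | inT_mul F G : inT A x F -> inT A x G -> inT A x (F *m G).

Definition subspace (W : 'cV[C]_n -> Prop) : Prop :=
  [/\ W 0, (forall u v, W u -> W v -> W (u + v)) &
      (forall (c : C) u, W u -> W (c *: u))].

Definition Tmodule A x (W : 'cV[C]_n -> Prop) : Prop :=
  subspace W /\ (forall F w, inT A x F -> W w -> W (F *m w)).

Definition irreducible_Tmodule A x (W : 'cV[C]_n -> Prop) : Prop :=
  [/\ Tmodule A x W,
      (exists w, W w /\ w != 0) &
      (forall U, Tmodule A x U -> (forall u, U u -> W u) ->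
         (forall u, U u -> u = 0) \/ (forall w, W w -> U w))].

Definition hdot (u v : 'cV[C]_n) : C := \sum_y u y 0 * (v y 0)^*.

Definition orthogonal_to (chi : 'cV[C]_n) (W : 'cV[C]_n -> Prop) : Prop :=
  forall w, W w -> hdot w chi = 0.

Definition is_endpoint A x (W : 'cV[C]_n -> Prop) (r : 'I_D.+1) : Prop :=
  (exists w, W w /\ dualE A x r *m w != 0) /\
  (forall i : 'I_D.+1, (i < r)%N -> forall w, W w -> dualE A x i *m w = 0).

Definition lin_dep2 (u v : 'cV[C]_n) : Prop :=
  exists a b : C, (a != 0 \/ b != 0) /\ a *: u + b *: v = 0.

(* thin: dim E_i^* W <= 1 for all i, i.e. any two vectors of E_i^* W are dependent. *)
Definition thin A x (W : 'cV[C]_n -> Prop) : Prop :=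
  forall i u v, W u -> W v -> lin_dep2 (dualE A x i *m u) (dualE A x i *m v).

Definition xhat (x : 'I_n) : 'cV[C]_n := delta_mx x 0.

Definition relative_codesign A x (t : nat) (psi : 'cV[C]_n) : Prop :=
  forall i : 'I_D.+1, (1 <= i <= t)%N ->
    lin_dep2 (dualE A x i *m psi) (A i *m xhat x).

End Scheme.

(* Let N be the space of vectors of E_1^*V + ... + E_t^*V orthogonal to the primary module
   M x̂, and S the orthogonal complement of T N.  A vector lies in S exactly when all its
   T-translates are relative t-codesigns.  As T is closed under adjoints, S^⊥ is a T-module.
   An irreducible submodule of S^⊥ is orthogonal to x̂ ∈ S and is not contained in S, so its
   endpoint lies in [1, t]; this gives (i) => (ii).  Conversely, if W is irreducible with
   endpoint r in [1, t], then E_r^* W ⊥ S, because E_r^* S lies in the line of A_r x̂ while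
   W ⊥ A_r x̂; so W meets S^⊥ and is contained in it, which gives (ii) => (i).

   In the thin case put w_0 = E_r^* w ≠ 0 and w_{j+1} = E_{r+j+1}^* A_1 w_j.  As A_1 is
   tridiagonal with respect to the E_i^* and W is thin, A_1 w_j is a combination of w_{j-1},
   w_j, w_{j+1}; since every A_l is a polynomial in A_1, the span of the w_j is a T-module,
   hence equals W, and it lies in M w_0.  Finally <A_l w_0, chi> = <w_0, E_r^* A_l chi> = 0,
   as E_r^* A_l chi is a multiple of A_r x̂. *)

From HB Require Import structures.
From mathcomp Require Import all_boot all_order all_algebra.
From mathcomp Require Import zify.
From Stdlib Require Import Classical.
Import Order.TTheory GRing.Theory Num.Theory.
Set Implicit Arguments. Unset Strict Implicit. Unset Printing Implicit Defensive.
Local Open Scope ring_scope.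
Local Open Scope sesquilinear_scope.

Section InnerProduct.
Variables (C : numClosedFieldType) (n : nat).
Implicit Types (u v w : 'cV[C]_n) (F : 'M[C]_n).

Lemma hdotE u v : hdot u v = (v ^t* *m u) 0 0.
Proof. by rewrite mxE; apply: eq_bigr => y _; rewrite !mxE mulrC. Qed.

Lemma hdotDl u v w : hdot (u + v) w = hdot u w + hdot v w.
Proof. by rewrite !hdotE mulmxDr mxE. Qed.

Lemma hdotZl c u v : hdot (c *: u) v = c * hdot u v.
Proof. by rewrite !hdotE -scalemxAr mxE. Qed.

Lemma hdot0l v : hdot 0 v = 0.
Proof. by rewrite hdotE mulmx0 mxE. Qed.

Lemma hdotBl u v w : hdot (u - v) w = hdot u w - hdot v w.
Proof. by rewrite hdotDl -scaleN1r hdotZl mulN1r. Qed.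

Lemma hdot_suml I r (P : pred I) (f : I -> 'cV[C]_n) v :
  hdot (\sum_(i <- r | P i) f i) v = \sum_(i <- r | P i) hdot (f i) v.
Proof. by rewrite hdotE mulmx_sumr summxE; apply: eq_bigr => i _; rewrite hdotE. Qed.

Lemma hdotC u v : hdot u v = (hdot v u)^*.
Proof. by rewrite /hdot rmorph_sum; apply: eq_bigr => y _; rewrite rmorphM /= conjCK mulrC. Qed.

Lemma hdotDr u v w : hdot u (v + w) = hdot u v + hdot u w.
Proof. by rewrite hdotC hdotDl rmorphD /= -!hdotC. Qed.

Lemma hdotZr c u v : hdot u (c *: v) = c^* * hdot u v.
Proof. by rewrite hdotC hdotZl rmorphM /= -hdotC. Qed.

Lemma hdotBr u v w : hdot u (v - w) = hdot u v - hdot u w.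
Proof. by rewrite hdotDr -scaleN1r hdotZr rmorphN1 mulN1r. Qed.

Lemma hdot0r u : hdot u 0 = 0.
Proof. by rewrite hdotC hdot0l rmorph0. Qed.

Lemma hdot_sumr I r (P : pred I) (f : I -> 'cV[C]_n) u :
  hdot u (\sum_(i <- r | P i) f i) = \sum_(i <- r | P i) hdot u (f i).
Proof. by rewrite hdotC hdot_suml rmorph_sum; apply: eq_bigr => i _; rewrite /= -hdotC. Qed.

Lemma hdot_eq0 u : hdot u u = 0 -> u = 0.
Proof.
move=> /eqP; rewrite psumr_eq0 => [/allP u0|y _]; last by rewrite mul_conjC_ge0.
apply/matrixP => y j; rewrite ord1 mxE.
by have /(_ (mem_index_enum y)) := u0 y; rewrite implyTb mul_conjC_eq0 => /eqP.
Qed.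

Lemma hdot_adjl F u v : hdot (F *m u) v = hdot u (F ^t* *m v).
Proof. by rewrite !hdotE trmx_mul map_mxM trmxCK mulmxA. Qed.

Lemma hdot_adjr F u v : hdot u (F *m v) = hdot (F ^t* *m u) v.
Proof. by rewrite hdotC hdot_adjl -hdotC. Qed.

Lemma subspace_vspace (U : {vspace 'cV[C]_n}) : subspace (fun v => v \in U).
Proof. by split=> [|u v|c u]; [exact: mem0v | exact: memvD | exact: memvZ]. Qed.

Lemma vspace_of_subspace (W : 'cV[C]_n -> Prop) :
  subspace W -> exists U : {vspace 'cV[C]_n}, forall v, W v <-> v \in U.
Proof.
case=> W0 WD WZ.
suff grow k (U : {vspace 'cV[C]_n}) : (\dim {:'cV[C]_n} - \dim U < k)%N ->
    (forall u, u \in U -> W u) -> exists U' : {vspace 'cV[C]_n}, forall v, W v <-> v \in U'.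
  by apply: (grow _ 0%VS (ltnSn _)) => u; rewrite memv0 => /eqP->.
elim: k U => [|k IHk] U // dimU UW.
have [[v Wv vU] | noW] := classic (exists2 v, W v & v \notin U); last first.
  by exists U => v; split=> [Wv | /UW //]; apply: contraT => vU; case: noW; exists v.
apply: (IHk (U + <[v]>)%VS).
  have := dimv_leqif_sup (addvSl U <[v]>); rewrite subv_add subvv /= -memvE => /ltn_leqif.
  have := dimvS (subvf (U + <[v]>)%VS); rewrite (negbTE vU) => ? ?; lia.
by move=> _ /memv_addP [u uU [_ /vlineP [c ->] ->]]; apply: WD; [exact: UW | exact: WZ].
Qed.

Lemma orth_projection (X : seq 'cV[C]_n) v :
  exists2 z, z \in <<X>>%VS & forall u, u \in <<X>>%VS -> hdot (v - z) u = 0.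
Proof.
elim: X v => [|u X IHX] v.
  by exists 0 => [|w]; rewrite ?mem0v // span_nil memv0 => /eqP->; rewrite hdot0r.
have [z zX orth_z] := IHX v; have [b bX orth_b] := IHX u.
have XuX : (<<X>> <= <<u :: X>>)%VS by rewrite span_cons addvSr.
have uXu : u \in <<u :: X>>%VS by rewrite memv_span ?mem_head.
pose k := hdot (v - z) (u - b) / hdot (u - b) (u - b).
exists (z + k *: (u - b)).
  by apply: memvD; [exact: (subvP XuX) | apply/memvZ/memvB => //; exact: (subvP XuX)].
have orthX m : m \in <<X>>%VS -> hdot (v - (z + k *: (u - b))) m = 0.
  by move=> mX; rewrite opprD addrA hdotBl hdotZl orth_z // orth_b // mulr0 subr0.
have orth_ub : hdot (v - (z + k *: (u - b))) (u - b) = 0.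
  rewrite opprD addrA hdotBl hdotZl; have [ub0|ub0] := eqVneq (u - b) 0.
    by rewrite ub0 !hdot0r mulr0 subr0.
  by rewrite /k mulfVK ?subrr //; apply: contra ub0 => /eqP/hdot_eq0->.
have orth_u : hdot (v - (z + k *: (u - b))) u = 0.
  by rewrite -[X in hdot _ X](subrK b) hdotDr orth_ub orthX // add0r.
move=> w; rewrite span_cons => /memv_addP [_ /vlineP [c ->] [m mX ->]].
by rewrite hdotDr hdotZr orth_u orthX // mulr0 add0r.
Qed.

Lemma subspace_orth_projection (W : 'cV[C]_n -> Prop) v : subspace W ->
  exists2 z, W z & forall u, W u -> hdot (v - z) u = 0.
Proof.
move=> /vspace_of_subspace [U WU].
have [z zU orth_z] := orth_projection (vbasis U) v.
rewrite (span_basis (vbasisP U)) in zU orth_z.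
by exists z => [|u /WU]; [exact/WU | exact: orth_z].
Qed.

Lemma memv_span_ind (X : seq 'cV[C]_n) (P : 'cV[C]_n -> Prop) :
  subspace P -> (forall u, u \in X -> P u) -> forall v, v \in <<X>>%VS -> P v.
Proof.
case=> P0 PD PZ PX v /(coord_span (X := in_tuple X))->.
by apply: big_ind => // i _; apply/PZ/PX/mem_nth.
Qed.

Lemma memv_span_mulmx (X : seq 'cV[C]_n) (U : {vspace 'cV[C]_n}) F :
  (forall u, u \in X -> F *m u \in U) -> forall v, v \in <<X>>%VS -> F *m v \in U.
Proof.
apply: memv_span_ind; split=> [|u v Fu Fv|c u Fu]; first by rewrite mulmx0 mem0v.
  by rewrite mulmxDr memvD.
by rewrite -scalemxAr memvZ.
Qed.

Lemma lin_dep2_scale u v : (v = 0 -> u = 0) -> lin_dep2 u v -> exists c, u = c *: v.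
Proof.
move=> v0u0 [a [b [ab0 abuv]]]; have [a0|a0] := eqVneq a 0.
  move: ab0 abuv; rewrite a0 eqxx scale0r add0r => -[//|b0 /eqP].
  by rewrite scaler_eq0 (negbTE b0) => /eqP/v0u0->; exists 0; rewrite scale0r.
exists (- (b / a)); apply: (scalerI a0); rewrite scalerA mulrN mulrCA mulfV // mulr1.
by apply/eqP; rewrite scaleNr -addr_eq0 abuv.
Qed.

Lemma lin_dep2_multiple c v : lin_dep2 (c *: v) v.
Proof. by exists 1, (- c); split; [left; exact: oner_neq0 | rewrite scale1r scaleNr subrr]. Qed.

Lemma hdot_span_eq0 (X : seq 'cV[C]_n) v :
  (forall u, u \in X -> hdot v u = 0) -> forall w, w \in <<X>>%VS -> hdot v w = 0.
Proof.
apply: memv_span_ind; split=> [|u w vu vw|c u vu]; first exact: hdot0r.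
  by rewrite hdotDr vu vw addr0.
by rewrite hdotZr vu mulr0.
Qed.

End InnerProduct.

Section Tmodules.
Variables (C : numClosedFieldType) (n D : nat) (A : 'I_D.+1 -> 'M[C]_n) (x : 'I_n).
Implicit Types (W : 'cV[C]_n -> Prop) (F : 'M[C]_n).

Lemma inT_stable (P : 'cV[C]_n -> Prop) : subspace P ->
    (forall i u, P u -> P (A i *m u)) -> (forall i u, P u -> P (dualE A x i *m u)) ->
  forall F u, inT A x F -> P u -> P (F *m u).
Proof.
case=> _ PD PZ PA PE F u TF.
elim: TF u => {F} [i|i||F G _ IHF _ IHG|c F _ IHF|F G _ IHF _ IHG] u Pu.
- exact: PA.
- exact: PE.
- by rewrite mul1mx.
- by rewrite mulmxDl; apply: PD; [exact: IHF | exact: IHG].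
- by rewrite -scalemxAl; apply/PZ/IHF.
- by rewrite -mulmxA; apply/IHF/IHG.
Qed.

Lemma Tmodule_cap W1 W2 : Tmodule A x W1 -> Tmodule A x W2 ->
  Tmodule A x (fun u => W1 u /\ W2 u).
Proof.
move=> [[W1_0 W1D W1Z] W1T] [[W2_0 W2D W2Z] W2T]; split; first split.
- by [].
- by move=> u v [? ?] [? ?]; split; [exact: W1D | exact: W2D].
- by move=> c u [? ?]; split; [exact: W1Z | exact: W2Z].
- by move=> F u TF [? ?]; split; [exact: W1T | exact: W2T].
Qed.

Lemma exists_endpoint W (i : 'I_D.+1) w : W w -> dualE A x i *m w != 0 ->
  exists r : 'I_D.+1, is_endpoint A x W r /\ (r <= i)%N.
Proof.
have [k] := ubnP i; elim: k i w => // k IHk i w ik Ww iw.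
have [[j [v [ji Wv jv]]] | none] :=
  classic (exists (j : 'I_D.+1) v, [/\ (j < i)%N, W v & dualE A x j *m v != 0]).
  have [r [end_r rj]] := IHk j v (leq_trans ji ik) Wv jv.
  by exists r; split; last exact: leq_trans rj (ltnW ji).
exists i; split=> //; split=> [|j ji v Wv]; first by exists w.
by apply/eqP; apply: contraT => jv; case: none; exists j, v.
Qed.

Hypothesis adj_closed : forall F, inT A x F -> inT A x (F ^t*).

Lemma Tmodule_orth (P : 'cV[C]_n -> Prop) :
    (forall F u, inT A x F -> P u -> P (F *m u)) ->
  Tmodule A x (fun v => forall u, P u -> hdot v u = 0).
Proof.
move=> PT; split; first split.
- by move=> u _; rewrite hdot0l.
- by move=> v w v_orth w_orth u Pu; rewrite hdotDl v_orth ?w_orth ?addr0.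
- by move=> c v v_orth u Pu; rewrite hdotZl v_orth ?mulr0.
- by move=> F v TF v_orth u Pu; rewrite hdot_adjl v_orth //; apply/PT/Pu/adj_closed.
Qed.

Lemma reducible_Tmodule W w : Tmodule A x W -> W w -> w != 0 ->
    ~ irreducible_Tmodule A x W ->
  exists Q, [/\ Tmodule A x Q, forall v, Q v -> W v,
              exists2 u, Q u & u != 0 & exists2 w1, W w1 & ~ Q w1].
Proof.
move=> TW Ww wnz notirr; apply: NNPP => noQ; apply: notirr; split=> //; first by exists w.
move=> Q TQ QW; have [Q0 | Qnz] := classic (forall u, Q u -> u = 0); first by left.
right=> v Wv; apply: NNPP => Qv; apply: noQ; exists Q; split=> //; last by exists v.
apply: NNPP => noq; apply: Qnz => u Qu; apply/eqP; apply: contraT => unz.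
by case: noq; exists u.
Qed.

Lemma irreducible_subTmodule W p :
    Tmodule A x W -> (exists2 w, W w & hdot w p != 0) ->
  exists W', [/\ irreducible_Tmodule A x W', forall w, W' w -> W w
               & exists2 w, W' w & hdot w p != 0].
Proof.
move=> TW Wp; have [U WU] := vspace_of_subspace TW.1.
have [k] := ubnP (\dim U); elim: k W U WU TW Wp => // k IHk W U WU TW [w Ww wp] dimU.
have smaller Q : Tmodule A x Q -> (forall v, Q v -> W v) -> (exists2 w1, W w1 & ~ Q w1) ->
    (exists2 q, Q q & hdot q p != 0) ->
  exists W', [/\ irreducible_Tmodule A x W', forall w, W' w -> W w
               & exists2 w, W' w & hdot w p != 0].
  move=> TQ QW [w1 Ww1 Qw1] Qp; have [V QV] := vspace_of_subspace TQ.1.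
  have VU : (V <= U)%VS by apply/subvP => v /QV /QW /WU.
  have dimV : (\dim V < \dim U)%N.
    rewrite (ltn_leqif (dimv_leqif_sup VU)).
    by apply/subvP => /(_ w1 (proj1 (WU w1) Ww1)) /QV.
  have [W' [irrW' W'Q W'p]] := IHk Q V QV TQ Qp (leq_trans dimV (ltnSE dimU)).
  by exists W'; split=> // v /W'Q /QW.
have [irrW | notirr] := classic (irreducible_Tmodule A x W).
  by exists W; split=> //; exists w.
have wnz : w != 0 by apply: contraNneq wp => ->; rewrite hdot0l.
have [Q [TQ QW [u0 Qu0 u0nz] [w1 Ww1 Qw1]]] := reducible_Tmodule TW Ww wnz notirr.
have [[q Qq qp] | Qp] := classic (exists2 q, Q q & hdot q p != 0).
  by apply: (smaller Q) => //; [exists w1 | exists q].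
(* Otherwise the orthogonal complement of Q in W catches p, as w - (projection onto Q) does. *)
pose Q' v := W v /\ forall q, Q q -> hdot v q = 0.
apply: (smaller Q').
- by apply: Tmodule_cap TW (Tmodule_orth _) => F v TF; apply: TQ.2.
- by move=> v [].
- exists u0 => [|[_ /(_ u0 Qu0) /hdot_eq0 u00]]; first exact: QW.
  by rewrite u00 eqxx in u0nz.
have [z Qz orth_z] := subspace_orth_projection w TQ.1.
exists (w - z); last first.
  rewrite hdotBl; suff -> : hdot z p = 0 by rewrite subr0.
  by apply: NNPP => zp; apply: Qp; exists z => //; apply/eqP.
split=> //; have [_ WD WZ] := TW.1.
by apply: WD => //; rewrite -scaleN1r; apply/WZ/QW.
Qed.

End Tmodules.

Section AssociationScheme.
Variables (C : numClosedFieldType) (n D : nat) (A : 'I_D.+1 -> 'M[C]_n) (x : 'I_n).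
Hypothesis scheme : is_symmetric_scheme A.
Implicit Types (y z : 'I_n) (u v w : 'cV[C]_n) (F : 'M[C]_n).

Definition dist y z : 'I_D.+1 := odflt ord0 [pick i | A i y z == 1].

Lemma A0E : A ord0 = 1%:M.
Proof. by case: scheme => _ []. Qed.

Lemma A_mul i j : exists c : 'I_D.+1 -> C, A i *m A j = \sum_k c k *: A k.
Proof. by case: scheme. Qed.

Lemma A_ge0 i y z : 0 <= A i y z.
Proof. by case: scheme => /(_ i y z) [|] -> *; rewrite ?lexx ?ler01. Qed.

Lemma A_sum y z : \sum_i A i y z = 1.
Proof. by case: scheme => _ [_ Asum] _ _ _; rewrite -summxE Asum mxE. Qed.

Lemma distP y z : A (dist y z) y z = 1.
Proof.
rewrite /dist; case: pickP => [i /eqP // | none]; exfalso.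
have /eqP := A_sum y z; rewrite big1 1?eq_sym ?oner_eq0 // => i _.
by case: scheme => /(_ i y z) [//|Ai] *; move: (none i); rewrite Ai eqxx.
Qed.

Lemma A_dist i y z : A i y z = (dist y z == i)%:R.
Proof.
have [<-|ne] := eqVneq; first exact: distP.
case: scheme => /(_ i y z) [-> //|Ai1] *; exfalso.
have := A_sum y z; rewrite (bigD1 i) //= (bigD1 (dist y z)) //=.
rewrite Ai1 distP addrA => sum1.
have : 0 <= \sum_(j | (j != i) && (j != dist y z)) A j y z by apply: sumr_ge0 => j _; exact: A_ge0.
have -> : \sum_(j | (j != i) && (j != dist y z)) A j y z = - 1.
  by apply: (addrI (1 + 1)); rewrite sum1 addrK.
by rewrite oppr_ge0 ler10.
Qed.

Lemma dist_eq y z i : (dist y z == i) = (A i y z == 1).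
Proof. by rewrite A_dist; case: eqP; rewrite ?eqxx // eq_sym oner_eq0. Qed.

Lemma A_sym i y z : A i y z = A i z y.
Proof. by case: scheme => _ _ Asym _ _; rewrite -[in LHS]Asym mxE. Qed.

Lemma dist_sym y z : dist y z = dist z y.
Proof. by apply/eqP; rewrite dist_eq A_sym distP. Qed.

Lemma dist_eq0 y z : (dist y z == 0 :> nat) = (y == z).
Proof.
rewrite -[LHS]/(dist y z == ord0).
by rewrite dist_eq A0E mxE; case: (y == z); rewrite ?eqxx // eq_sym oner_eq0.
Qed.

Lemma sum_A_entry (c : 'I_D.+1 -> C) y z : (\sum_j c j *: A j) y z = c (dist y z).
Proof.
rewrite summxE (bigD1 (dist y z)) //= mxE distP mulr1 big1 ?addr0 // => j jd.
by rewrite mxE A_dist eq_sym (negbTE jd) mulr0.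
Qed.

Lemma exists_dist j : exists y z, dist y z = j.
Proof.
case: scheme => _ _ _ /(_ j) Aj _; apply: NNPP => none; move/eqP: Aj; apply.
apply/matrixP => y z; rewrite A_dist mxE; case: eqP => // yz.
by case: none; exists y, z.
Qed.

Lemma mxpowS (M : 'M[C]_n) k : mxpow M k.+1 = M *m mxpow M k.
Proof. by []. Qed.

Lemma mxpow_sumA i k : exists c : 'I_D.+1 -> C, mxpow (A i) k = \sum_j c j *: A j.
Proof.
have [d AiA] := fin_all_exists (A_mul i).
elim: k => [|k [c powE]].
  exists (fun j => (j == ord0)%:R); rewrite (bigD1 ord0) //= big1 => [|j /negbTE->]; last first.
    by rewrite scale0r.
  by rewrite scale1r A0E addr0.
exists (fun l => \sum_j c j * d j l); rewrite mxpowS powE mulmx_sumr.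
under eq_bigr do rewrite -scalemxAr AiA scaler_sumr.
rewrite exchange_big; apply: eq_bigr => l _; rewrite scaler_suml.
by apply: eq_bigr => j _; rewrite scalerA.
Qed.

Lemma A_adj i : (A i)^t* = A i.
Proof. by apply/matrixP => y z; rewrite !mxE A_dist rmorph_nat dist_sym -A_dist. Qed.

Definition Mspan u : {vspace 'cV[C]_n} := <<[seq A l *m u | l : 'I_D.+1]>>%VS.

Lemma A_Mspan u l : A l *m u \in Mspan u.
Proof. exact/memv_span/image_f. Qed.

Lemma Mspan_A u i v : v \in Mspan u -> A i *m v \in Mspan u.
Proof.
apply: memv_span_mulmx => _ /imageP [l _ ->].
have [c AiAl] := A_mul i l; rewrite mulmxA AiAl mulmx_suml.
by apply: memv_suml => k _; rewrite -scalemxAl memvZ ?A_Mspan.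
Qed.

(* E_k^*(x), indexed by nat so that E_k^* = 0 for k > D. *)
Definition Estar (k : nat) : 'M[C]_n := diag_mx (\row_y (dist x y == k :> nat)%:R).

Definition Axhat (j : 'I_D.+1) : 'cV[C]_n := A j *m xhat C x.

Lemma Estar_mulE k u y : (Estar k *m u) y 0 = (dist x y == k :> nat)%:R * u y 0.
Proof. by rewrite mul_diag_mx !mxE. Qed.

Lemma dualE_Estar i : dualE A x i = Estar i.
Proof. by congr diag_mx; apply/rowP => y; rewrite !mxE A_dist. Qed.

Lemma Estar_adj k : (Estar k)^t* = Estar k.
Proof.
apply/matrixP => y z; rewrite !mxE; have [->|yz] := eqVneq y z; first by rewrite rmorph_nat.
by rewrite !mulr0n rmorph0.
Qed.

Lemma hdot_Estar k u v : hdot (Estar k *m u) v = hdot u (Estar k *m v).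
Proof. by rewrite hdot_adjl Estar_adj. Qed.

Lemma Estar_Estar j k u : Estar j *m (Estar k *m u) = if j == k then Estar k *m u else 0.
Proof.
apply/matrixP => y i; rewrite ord1 !Estar_mulE mulrA -natrM mulnb.
have [->|jk] := eqVneq j k; first by rewrite Estar_mulE andbb.
by rewrite mxE; have [->|] := eqVneq (dist x y : nat) j; rewrite ?(negbTE jk) mul0r.
Qed.

Lemma Estar_gt k u : (D < k)%N -> Estar k *m u = 0.
Proof.
move=> Dk; apply/matrixP => y i; rewrite ord1 Estar_mulE mxE.
by rewrite ltn_eqF ?mul0r // (leq_trans (ltn_ord _) Dk).
Qed.

Lemma Estar_sum u : \sum_(i < D.+1) Estar i *m u = u.
Proof.
apply/matrixP => y j; rewrite ord1 summxE (bigD1 (dist x y)) //= Estar_mulE eqxx mul1r.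
by rewrite big1 ?addr0 // => i ne; rewrite Estar_mulE val_eqE eq_sym (negbTE ne) mul0r.
Qed.

Lemma Estar0_xhat u : Estar 0 *m u = u x 0 *: xhat C x.
Proof.
apply/matrixP => y j; rewrite ord1 Estar_mulE !mxE andbT dist_eq0.
by case: eqVneq => [->|]; rewrite ?mul1r ?mulr1 // mul0r mulr0.
Qed.

Lemma Estar0_entry u : (Estar 0 *m u) x 0 = u x 0.
Proof. by rewrite Estar_mulE dist_eq0 eqxx mul1r. Qed.

Lemma hdot_xhat u : hdot u (xhat C x) = u x 0.
Proof.
rewrite /hdot (bigD1 x) //= big1 ?addr0 => [|y yx]; first by rewrite mxE !eqxx rmorph1 mulr1.
by rewrite mxE (negbTE yx) rmorph0 mulr0.
Qed.

Lemma Axhat_E j y : Axhat j y 0 = (dist x y == j)%:R.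
Proof.
rewrite mxE (bigD1 x) //= big1 ?addr0 => [|z zx]; last by rewrite mxE (negbTE zx) mulr0.
by rewrite mxE !eqxx mulr1 A_dist dist_sym.
Qed.

Lemma Estar_Axhat k j : Estar k *m Axhat j = if k == j :> nat then Axhat j else 0.
Proof.
apply/matrixP => y i; rewrite ord1 Estar_mulE Axhat_E.
have [->|kj] := eqVneq k j; first by rewrite Axhat_E -natrM mulnb val_eqE andbb.
rewrite mxE; have [dk|] := eqVneq (dist x y : nat) k; last by rewrite mul0r.
by rewrite -val_eqE /= dk (negbTE kj) mulr0.
Qed.

Lemma Estar_Axhat0 k u : Axhat k = 0 -> Estar k *m u = 0.
Proof.
by move=> ak0; apply/matrixP => y i; rewrite ord1 Estar_mulE -Axhat_E ak0 !mxE mul0r.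
Qed.

Lemma Tmodule_Estar W k v : Tmodule A x W -> W v -> W (Estar k *m v).
Proof.
move=> [[W0 _ _] WT] Wv; have [kD|Dk] := leqP k D; last by rewrite Estar_gt.
by rewrite -(inordK (kD : (k < D.+1)%N)) -dualE_Estar; apply: WT Wv; constructor.
Qed.

Lemma inT_adj F : inT A x F -> inT A x (F ^t*).
Proof.
elim=> {F} [i|i||F G _ TF _ TG|c F _ TF|F G _ TF _ TG].
- by rewrite A_adj; constructor.
- by rewrite dualE_Estar Estar_adj -dualE_Estar; constructor.
- by rewrite trmx1 map_mx1; constructor.
- by rewrite linearD map_mxD; constructor.
- by rewrite linearZ map_mxZ; constructor.
- by rewrite trmx_mul map_mxM; constructor.
Qed.

Lemma endpoint_orth_Axhat W r j w : Tmodule A x W -> is_endpoint A x W r -> (0 < r)%N ->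
  W w -> hdot w (Axhat j) = 0.
Proof.
move=> [_ WT] [_ below] r_gt0 Ww.
rewrite /Axhat hdot_adjr A_adj hdot_xhat -Estar0_entry -(dualE_Estar ord0) below ?mxE //.
by apply: WT => //; constructor.
Qed.

Lemma Mspan_xhat_stable F u :
  inT A x F -> u \in Mspan (xhat C x) -> F *m u \in Mspan (xhat C x).
Proof.
move=> TF; apply: (inT_stable (P := fun v => v \in Mspan (xhat C x))) TF => [|i|i].
- exact: subspace_vspace.
- exact: Mspan_A.
apply: memv_span_mulmx => _ /imageP [j _ ->].
by rewrite dualE_Estar Estar_Axhat; case: ifP => _; rewrite ?mem0v ?A_Mspan.
Qed.

Section Codesign.
Variable t : nat.
Implicit Types (G : 'M[C]_n) (W : 'cV[C]_n -> Prop).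
Local Notation inT := (inT A x).

Lemma codesign_Estar psi (i : 'I_D.+1) : relative_codesign A x t psi -> (1 <= i <= t)%N ->
  exists c, Estar i *m psi = c *: Axhat i.
Proof.
move=> psi_t it; apply: lin_dep2_scale; first exact: Estar_Axhat0.
by rewrite -dualE_Estar; exact: psi_t.
Qed.

(* [defect] is the space N above and [Tcodesign] is S = (T N)^⊥. *)
Definition defect v := (forall j, hdot v (Axhat j) = 0) /\
  (forall k : 'I_D.+1, ~~ (1 <= k <= t)%N -> Estar k *m v = 0).

Definition Tcodesign u := forall F v, inT F -> defect v -> hdot (F *m v) u = 0.

Lemma defect_orth v u : defect v ->
  (forall i : 'I_D.+1, (1 <= i <= t)%N -> hdot v (Estar i *m u) = 0) -> hdot v u = 0.
Proof.
move=> [_ v_out] v_in; rewrite -(Estar_sum u) hdot_sumr; apply: big1 => i _.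
by case: (boolP (1 <= i <= t)%N) => [/v_in // | /v_out vi]; rewrite -hdot_Estar vi hdot0l.
Qed.

Lemma Tcodesign_subspace : subspace Tcodesign.
Proof.
split=> [F v _ _ | u w Su Sw F v TF dv | c u Su F v TF dv]; first exact: hdot0r.
  by rewrite hdotDr Su ?Sw ?addr0.
by rewrite hdotZr Su ?mulr0.
Qed.

Lemma Tcodesign_stable F u : inT F -> Tcodesign u -> Tcodesign (F *m u).
Proof.
move=> TF Su G v TG dv; rewrite hdot_adjr mulmxA; apply: Su dv.
exact: inT_mul (inT_adj TF) TG.
Qed.

Lemma Tcodesign_xhat : Tcodesign (xhat C x).
Proof.
move=> F v TF [v_Axhat _].
rewrite hdot_adjl (hdot_span_eq0 _ (Mspan_xhat_stable (inT_adj TF) _)) //.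
  by move=> _ /imageP [j _ ->]; exact: v_Axhat.
by have := A_Mspan (xhat C x) ord0; rewrite A0E mul1mx.
Qed.

Lemma Tcodesign_Estar u (i : 'I_D.+1) : Tcodesign u -> (1 <= i <= t)%N ->
  exists c, Estar i *m u = c *: Axhat i.
Proof.
move=> Su it; set a := Axhat i; pose c := hdot (Estar i *m u) a / hdot a a.
pose v := Estar i *m u - c *: a; exists c; apply/eqP; rewrite -subr_eq0 -/v; apply/eqP.
have Ev : Estar i *m v = v.
  by rewrite mulmxBr -scalemxAr Estar_Axhat eqxx Estar_Estar eqxx.
have v_a : hdot v a = 0.
  rewrite hdotBl hdotZl; have [->|a0] := eqVneq a 0; first by rewrite !hdot0r mulr0 subr0.
  by rewrite /c mulfVK ?subrr //; apply: contra a0 => /eqP/hdot_eq0->.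
have dv : defect v.
  split=> [j|k kt]; rewrite -Ev.
    have [->|ij] := eqVneq j i; first by rewrite Ev.
    by rewrite hdot_Estar Estar_Axhat val_eqE eq_sym (negbTE ij) hdot0r.
  by rewrite Estar_Estar; case: eqVneq => // ki; rewrite ki it in kt.
apply: hdot_eq0; rewrite {2}/v hdotBr hdotZr v_a mulr0 subr0 -hdot_Estar Ev.
by rewrite -[v in hdot v]Ev -dualE_Estar; apply: Su dv; exact: inT_dualE.
Qed.

Lemma TcodesignP u : Tcodesign u <-> forall F, inT F -> relative_codesign A x t (F *m u).
Proof.
split=> [Su F TF i it | codes G v TG dv].
  rewrite dualE_Estar; have [c ->] := Tcodesign_Estar (Tcodesign_stable TF Su) it.
  exact: lin_dep2_multiple.
rewrite hdot_adjl; apply: (defect_orth dv) => i it.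
have [c ->] := codesign_Estar (codes _ (inT_adj TG)) it.
by rewrite hdotZr dv.1 mulr0.
Qed.

Lemma Tmodule_Tcodesign W : Tmodule A x W ->
    (forall i : 'I_D.+1, (1 <= i <= t)%N -> forall w, W w -> Estar i *m w = 0) ->
  forall w, W w -> Tcodesign w.
Proof.
move=> [_ WT] W_out w Ww G v TG dv; rewrite hdot_adjl.
apply: (defect_orth dv) => i it; rewrite W_out ?hdot0r //.
by apply: WT Ww; exact: inT_adj.
Qed.

Lemma Tcodesign_of_orth chi :
    (forall W, irreducible_Tmodule A x W ->
       (exists r : 'I_D.+1, is_endpoint A x W r /\ (1 <= r <= t)%N) -> orthogonal_to chi W) ->
  Tcodesign chi.
Proof.
move=> chi_orth; apply: NNPP => notS.
pose Sperp w := forall s, Tcodesign s -> hdot w s = 0.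
have TSperp : Tmodule A x Sperp.
  by apply: (Tmodule_orth inT_adj) => F s TF; exact: Tcodesign_stable.
have Sperp_chi : exists2 w, Sperp w & hdot w chi != 0.
  apply: NNPP => none; apply: notS => F v TF dv; apply/eqP; apply: contraT => Fv_chi.
  by case: none; exists (F *m v) => // s; exact.
have [W [irrW WS [w Ww w_chi]]] := irreducible_subTmodule inT_adj TSperp Sperp_chi.
have [TW _ _] := irrW.
have [i [it [u Wu iu]]] : exists i : 'I_D.+1, (1 <= i <= t)%N /\ exists2 u, W u & Estar i *m u != 0.
  apply: NNPP => none; move: w_chi; suff -> : w = 0 by rewrite hdot0l eqxx.
  apply/hdot_eq0/(WS w Ww)/(Tmodule_Tcodesign TW) => // j jt v Wv.
  by apply/eqP; apply: contraT => jv; case: none; exists j; split=> //; exists v.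
have [r [end_r ri]] : exists r : 'I_D.+1, is_endpoint A x W r /\ (r <= i)%N.
  by apply: (exists_endpoint Wu); rewrite dualE_Estar.
have r_gt0 : (0 < r)%N.
  case: end_r => [[v [Wv rv]] _]; rewrite lt0n; apply: contraNneq rv => r0.
  by rewrite dualE_Estar r0 Estar0_xhat -hdot_xhat (WS v Wv _ Tcodesign_xhat) scale0r.
move: w_chi; rewrite (chi_orth W irrW) ?eqxx //.
by exists r; split=> //; rewrite r_gt0 (leq_trans ri) //; case/andP: it.
Qed.

Lemma endpoint_orth_Tcodesign W (r : 'I_D.+1) w s :
    irreducible_Tmodule A x W -> is_endpoint A x W r -> (1 <= r <= t)%N ->
  W w -> Tcodesign s -> hdot w s = 0.
Proof.
move=> [TW _ irrW] end_r rt; have r_gt0 : (0 < r)%N by case/andP: rt.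
pose Sperp w := forall s, Tcodesign s -> hdot w s = 0.
have TWS : Tmodule A x (fun w => W w /\ Sperp w).
  apply: Tmodule_cap TW _; apply: (Tmodule_orth inT_adj) => F u TF; exact: Tcodesign_stable.
have [[w1 [Ww1 rw1]] _] := end_r; set w2 := dualE A x r *m w1.
have Ww2 : W w2 by apply: TW.2 Ww1; constructor.
have [z Sz orth_z] := subspace_orth_projection w2 Tcodesign_subspace.
have z0 : z = 0.
  apply: hdot_eq0; have /eqP := orth_z z Sz; rewrite hdotBl subr_eq0 => /eqP <-.
  have [c rz] := Tcodesign_Estar Sz rt.
  have w2E : Estar r *m w2 = w2 by rewrite /w2 dualE_Estar Estar_Estar eqxx.
  by rewrite -w2E hdot_Estar rz hdotZr (endpoint_orth_Axhat _ TW end_r) ?mulr0.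
have Sw2 : Sperp w2 by move=> s' Ss'; have := orth_z s' Ss'; rewrite z0 subr0.
have [/(_ w2 (conj Ww2 Sw2)) w20 | WS] := irrW _ TWS (fun u => @proj1 _ _).
  by move: rw1; rewrite -/w2 w20 eqxx.
by move=> Ww; exact: (WS w Ww).2.
Qed.

Lemma orth_endpoint_modulesP chi :
  (forall W, irreducible_Tmodule A x W ->
     (exists r : 'I_D.+1, is_endpoint A x W r /\ (1 <= r <= t)%N) -> orthogonal_to chi W)
  <-> (forall F, inT F -> relative_codesign A x t (F *m chi)).
Proof.
split=> [chi_orth | codes W irrW [r [end_r rt]] w Ww].
  by apply/TcodesignP/Tcodesign_of_orth.
by apply: endpoint_orth_Tcodesign irrW end_r rt Ww _; apply/TcodesignP.
Qed.

End Codesign.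

Section Metric.
Hypotheses (metric : is_metric A) (D_gt0 : (0 < D)%N).
Local Notation A1 := (A (inord 1)).

Lemma A1_dist y z : A1 y z = (dist y z == 1 :> nat)%:R.
Proof. by rewrite A_dist -val_eqE /= inordK. Qed.

Lemma mxpow_A1_ge0 k y z : 0 <= mxpow A1 k y z.
Proof.
elim: k y z => [|k IHk] y z; first by rewrite mxE ler0n.
by rewrite mxpowS mxE; apply: sumr_ge0 => w _; rewrite mulr_ge0 ?A_ge0.
Qed.

Lemma mxpow_A1_dist y z :
  mxpow A1 (dist y z) y z != 0 /\ forall k, (k < dist y z)%N -> mxpow A1 k y z = 0.
Proof. exact: (metric (dist y z) y z).1 (distP y z). Qed.

Lemma dist_adj y (w : 'I_n) z : dist y w = 1 :> nat -> (dist y z <= (dist w z).+1)%N.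
Proof.
move=> yw1; rewrite leqNgt; apply/negP => /(mxpow_A1_dist y z).2 /eqP.
rewrite mxpowS mxE psumr_eq0 => [/allP /(_ w (mem_index_enum w))|u _]; last first.
  by rewrite mulr_ge0 ?A_ge0 ?mxpow_A1_ge0.
by rewrite A1_dist yw1 eqxx mul1r implyTb (negbTE (mxpow_A1_dist w z).1).
Qed.

Lemma Estar_A1_Estar j k u : (k.+1 < j)%N || (j.+1 < k)%N ->
  Estar j *m (A1 *m (Estar k *m u)) = 0.
Proof.
move=> far; apply/matrixP => y i; rewrite ord1 Estar_mulE [in RHS]mxE [X in _ * X]mxE.
have [dy|] := eqVneq (dist x y : nat) j; last by rewrite mul0r.
rewrite mul1r big1 // => z _; rewrite Estar_mulE A1_dist.
have [yz1|] := eqVneq (dist y z : nat) 1; last by rewrite mul0r.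
have [dz|] := eqVneq (dist x z : nat) k; last by rewrite mul0r mulr0.
have zy1 : dist z y = 1 :> nat by rewrite dist_sym.
have := dist_adj x yz1; have := dist_adj x zy1; rewrite !(dist_sym _ x) dy dz.
by move: far; lia.
Qed.

Lemma Estar_decomp3 k v : (0 < k)%N ->
    (forall j, (k.+1 < j)%N || (j.+1 < k)%N -> Estar j *m v = 0) ->
  v = Estar k.-1 *m v + Estar k *m v + Estar k.+1 *m v.
Proof.
move=> k_gt0 vanish; apply/matrixP => y i; rewrite ord1 [RHS]mxE [X in X + _]mxE !Estar_mulE.
rewrite -!mulrDl -!natrD; set d := nat_of_ord (dist x y).
have [far | near] := boolP ((k.+1 < d)%N || (d.+1 < k)%N).
  have /matrixP/(_ y 0) := vanish d far; rewrite Estar_mulE eqxx mul1r mxE => ->.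
  by rewrite mulr0.
suff -> : ((d == k.-1) + (d == k) + (d == k.+1))%N = 1%N by rewrite mul1r.
by move: near; lia.
Qed.


(* A_1^l = \sum_(j <= l) c_j A_j with c_l != 0, since by metricity (A_1^l)_yz vanishes when
   y and z are at distance greater than l but not when they are at distance l. *)
Lemma A_in_closure (P : 'M[C]_n -> Prop) :
    P 1%:M -> (forall F G, P F -> P G -> P (F + G)) -> (forall c F, P F -> P (c *: F)) ->
    (forall F, P F -> P (A1 *m F)) ->
  forall l, P (A l).
Proof.
move=> P1 PD PZ PA1; have P0 : P 0 by rewrite -(scale0r 1%:M); exact: PZ.
have Ppow k : P (mxpow A1 k) by elim: k => [|k IHk]; [exact: P1 | exact: PA1].
move=> l; have [m] := ubnP l; elim: m l => // m IHm l lm.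
have [c powE] := mxpow_sumA (inord 1) l.
have c_entry y z : c (dist y z) = mxpow A1 l y z by rewrite powE sum_A_entry.
have cl : c l != 0.
  have [y [z yz]] := exists_dist l.
  by have := (mxpow_A1_dist y z).1; rewrite yz -c_entry yz.
have c_gt (j : 'I_D.+1) : (l < j)%N -> c j = 0.
  by move=> lj; have [y [z yz]] := exists_dist j; rewrite -yz c_entry (mxpow_A1_dist y z).2 // yz.
have -> : A l = (c l)^-1 *: (mxpow A1 l - \sum_(j | j != l) c j *: A j).
  by rewrite powE (bigD1 l) //= addrK scalerA mulVf ?scale1r.
apply/PZ/PD; first exact: Ppow.
rewrite -scaleN1r; apply/PZ; apply: big_ind => // j jl.
have [j_lt_l | l_lt_j | /val_inj jl'] := ltngtP j l.
- by apply/PZ/IHm; exact: leq_trans j_lt_l lm.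
- by rewrite c_gt // scale0r.
- by rewrite jl' eqxx in jl.
Qed.

Section ThinModule.
Variables (W : 'cV[C]_n -> Prop) (r : 'I_D.+1) (w0 : 'cV[C]_n).
Hypotheses (TW : Tmodule A x W) (W_thin : thin A x W) (end_r : is_endpoint A x W r).
Hypotheses (r_gt0 : (0 < r)%N) (W_w0 : W w0) (w0_r : Estar r *m w0 = w0).

Fixpoint ws j := if j is j'.+1 then Estar (r + j) *m (A1 *m ws j') else w0.

Lemma W_A1 v : W v -> W (A1 *m v).
Proof. by move=> Wv; apply: TW.2 Wv; constructor. Qed.

Lemma W_ws j : W (ws j).
Proof. by elim: j => [|j IHj] //=; apply/(Tmodule_Estar _ TW)/W_A1. Qed.

Lemma Estar_ws j : Estar (r + j) *m ws j = ws j.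
Proof. by case: j => [|j] /=; rewrite ?addn0 ?w0_r // Estar_Estar eqxx. Qed.

Lemma thin_Estar k u v : W u -> W v -> lin_dep2 (Estar k *m u) (Estar k *m v).
Proof.
move=> Wu Wv; have [kD|Dk] := leqP k D.
  by rewrite -(inordK (kD : (k < D.+1)%N)) -dualE_Estar; exact: W_thin.
by rewrite !Estar_gt //; have := lin_dep2_multiple 0 (0 : 'cV[C]_n); rewrite scale0r.
Qed.

Lemma A1_ws j : exists b a, A1 *m ws j = b *: ws j.-1 + a *: ws j + ws j.+1.
Proof.
have rj_gt0 : (0 < r + j)%N by rewrite addn_gt0 r_gt0.
have decomp : A1 *m ws j = Estar (r + j).-1 *m (A1 *m ws j) +
    Estar (r + j) *m (A1 *m ws j) + Estar (r + j).+1 *m (A1 *m ws j).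
  by apply: Estar_decomp3 => // i far; rewrite -Estar_ws; exact: Estar_A1_Estar.
have [a Ea] : exists a, Estar (r + j) *m (A1 *m ws j) = a *: ws j.
  apply: lin_dep2_scale => [wj0|]; first by rewrite wj0 !mulmx0.
  by rewrite -[X in lin_dep2 _ X]Estar_ws; apply: thin_Estar; [apply: W_A1 |]; exact: W_ws.
have [b Eb] : exists b, Estar (r + j).-1 *m (A1 *m ws j) = b *: ws j.-1.
  case: j {rj_gt0 decomp Ea} => [|j] /=.
    exists 0; rewrite addn0 scale0r.
    have r1D : (r.-1 < D.+1)%N by rewrite (leq_ltn_trans (leq_pred r)).
    by rewrite -(inordK r1D) -dualE_Estar (proj2 end_r) ?inordK ?ltn_predL //; exact: W_A1.
  rewrite addnS /=; apply: lin_dep2_scale => [wj0|]; first by rewrite wj0 !mulmx0.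
  rewrite -[X in lin_dep2 _ X]Estar_ws; apply: thin_Estar; last exact: W_ws.
  by apply/W_A1/(Tmodule_Estar _ TW)/W_A1/W_ws.
by exists b, a; rewrite {1}decomp Ea Eb -addnS.
Qed.

Definition wspan : {vspace 'cV[C]_n} := <<[seq ws j | j <- iota 0 D.+1]>>%VS.

Lemma ws_wspan j : ws j \in wspan.
Proof.
have [jD|Dj] := ltnP j D.+1; first by rewrite memv_span // map_f // mem_iota.
by rewrite -Estar_ws Estar_gt ?mem0v // (leq_trans Dj) // leq_addl.
Qed.

Lemma A1_wspan v : v \in wspan -> A1 *m v \in wspan.
Proof.
apply: memv_span_mulmx => _ /mapP [j _ ->]; have [b [a ->]] := A1_ws j.
by rewrite !memvD ?memvZ ?ws_wspan.
Qed.

Lemma Tmodule_wspan : Tmodule A x (fun v => v \in wspan).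
Proof.
split=> [|M u TM]; first exact: subspace_vspace.
apply: (inT_stable (P := fun v => v \in wspan)) TM => [|i|i]; first exact: subspace_vspace.
  pose P F := forall v, v \in wspan -> F *m v \in wspan.
  apply: (A_in_closure (P := P)) => [v|F G PF PG v|c F PF v|F PF v] v_in.
  - by rewrite mul1mx.
  - by rewrite mulmxDl memvD ?PF ?PG.
  - by rewrite -scalemxAl memvZ ?PF.
  - by rewrite -mulmxA A1_wspan ?PF.
apply: memv_span_mulmx => _ /mapP [j _ ->].
by rewrite dualE_Estar -Estar_ws Estar_Estar; case: ifP; rewrite ?mem0v ?Estar_ws ?ws_wspan.
Qed.

Lemma ws_Mspan j : ws j \in Mspan w0.
Proof.
elim/ltn_ind: j => -[_|j IHj]; first by have := A_Mspan w0 ord0; rewrite A0E mul1mx.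
have [b [a /eqP]] := A1_ws j; rewrite addrC -subr_eq => /eqP <-.
by rewrite memvB ?Mspan_A ?memvD ?memvZ ?IHj // (leq_ltn_trans (leq_pred j)).
Qed.

Lemma irreducible_sub_Mspan : irreducible_Tmodule A x W -> w0 != 0 ->
  forall w, W w -> w \in Mspan w0.
Proof.
move=> [_ _ irrW] w0_nz w Ww.
have span_W v : v \in wspan -> W v.
  by apply: memv_span_ind TW.1 _ v => _ /mapP [j _ ->]; exact: W_ws.
have [span0 | W_span] := irrW _ Tmodule_wspan span_W.
  by move: w0_nz; rewrite -(span0 _ (ws_wspan 0)) eqxx.
have span_Mw0 : (wspan <= Mspan w0)%VS by apply/span_subvP => _ /mapP [j _ ->]; exact: ws_Mspan.
exact: subvP span_Mw0 _ (W_span w Ww).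
Qed.

Lemma Mspan_orth t chi : (r <= t)%N -> (forall l, relative_codesign A x t (A l *m chi)) ->
  forall w, w \in Mspan w0 -> hdot w chi = 0.
Proof.
move=> rt codes w wM; have rt' : (1 <= r <= t)%N by rewrite r_gt0.
rewrite hdotC (hdot_span_eq0 _ wM) ?conjC0 // => _ /imageP [l _ ->].
have [c rAl] := codesign_Estar (codes l) rt'.
rewrite hdot_adjr A_adj -w0_r -hdot_Estar rAl hdotZl hdotC (endpoint_orth_Axhat _ TW end_r) //.
by rewrite conjC0 mulr0.
Qed.

Lemma thin_orth t chi : irreducible_Tmodule A x W -> w0 != 0 -> (r <= t)%N ->
  (forall l, relative_codesign A x t (A l *m chi)) -> orthogonal_to chi W.
Proof.
by move=> irrW w0_nz rt codes w /(irreducible_sub_Mspan irrW w0_nz); apply: (Mspan_orth rt codes).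
Qed.

End ThinModule.
End Metric.
End AssociationScheme.

Theorem lemma3p4 (C : numClosedFieldType) (n D : nat)
  (A : 'I_D.+1 -> 'M[C]_n) (x : 'I_n) (t : nat) :
  is_symmetric_scheme A -> is_metric A -> (1 <= t <= D)%N ->
  (forall chi : 'cV[C]_n,
     (forall W, irreducible_Tmodule A x W ->
        (exists r : 'I_D.+1, is_endpoint A x W r /\ (1 <= r <= t)%N) ->
        orthogonal_to chi W)
     <-> (forall F, inT A x F -> relative_codesign A x t (F *m chi)))
  /\
  ((forall W, irreducible_Tmodule A x W ->
      (exists r : 'I_D.+1, is_endpoint A x W r /\ (r <= t)%N) -> thin A x W) ->
   forall chi : 'cV[C]_n,
     (forall l : 'I_D.+1, relative_codesign A x t (A l *m chi)) ->
     (forall W, irreducible_Tmodule A x W ->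
        (exists r : 'I_D.+1, is_endpoint A x W r /\ (1 <= r <= t)%N) ->
        orthogonal_to chi W)).
Proof.
move=> scheme metric /andP [t_gt0 tD]; split=> [chi|]; first exact: orth_endpoint_modulesP.
move=> thin_le_t chi codes W irrW [r [end_r /andP [r_gt0 rt]]].
have [[w1 [Ww1 rw1]] _] := end_r; have [TW _ _] := irrW.
have W_thin : thin A x W by apply: thin_le_t irrW _; exists r.
have w1_r : Estar A x r *m w1 != 0 by rewrite -dualE_Estar.
have D_gt0 : (0 < D)%N := leq_trans t_gt0 tD.
have W_w0 : W (Estar A x r *m w1) by exact: Tmodule_Estar.
have w0_r : Estar A x r *m (Estar A x r *m w1) = Estar A x r *m w1 by rewrite Estar_Estar eqxx.
exact: (thin_orth scheme metric D_gt0 TW W_thin end_r r_gt0 W_w0 w0_r irrW w1_r rt codes).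
Qed.
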